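(* Let $(Q,Sp,I)$ be a skew-gentle triple. Then there is an isomorphism of $k$-vector spaces $kQ^{sp}/\langle I^{sg}\rangle\cong kQ^{sp}/\langle I^{sp}\rangle$. In particular $kQ^{sp}/\langle I^{sg}\rangle$ is finite dimensional if and only if $kQ^{sp}/\langle I^{sp}\rangle$ is finite dimensional.
   Context: $k$ is an algebraically closed field; quivers are finite and paths are composed right to left. A pair $(Q,I)$ with $I$ a set of paths of $Q$ is a gentle pair if: (G1) each vertex is the start of at most two arrows and the target of at most two arrows; (G2) every path in $I$ has length $2$; (G3) for each arrow $\alpha$ there is at most one arrow $\beta$ with $\beta\alpha\in I$ and at most one arrow $\gamma$ with $\gamma\alpha$ a path not in $I$; (G4) for each arrow $\alpha$ there is at most one arrow $\beta$ with $\alpha\beta\in I$ and at most one arrow $\gamma$ with $\alpha\gamma$ a path not in $I$. A triple $(Q,Sp,I)$ with $Q$ a quiver, $Sp\subseteq Q_0$ and $I$ a set of paths in $Q$ is skew-gentle if $(Q^{sp},I^{sp})$ is a gentle pair, where $Q^{sp}$ has vertices $Q_0$ and arrows $Q_1\cup\{\epsilon_i\mid i\in Sp\}$ with $\epsilon_i$ a new loop at $i$ (special loops), and $I^{sp}=I\cup\{\epsilon_i^2\mid i\in Sp\}$. Set $I^{sg}=I\cup\{\epsilon_i^2-\epsilon_i\mid i\in Sp\}$; $\langle X\rangle$ denotes the ideal of $kQ^{sp}$ generated by $X$. *)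

From HB Require Import structures.
From mathcomp Require Import all_boot all_order all_algebra.
From mathcomp Require Import finmap.
From mathcomp.multinomials Require Import monalg.
Set Implicit Arguments. Unset Strict Implicit. Unset Printing Implicit Defensive.
Import Order.TTheory GRing.Theory.
Local Open Scope ring_scope.

Section SkewGentle.
Variables (Q0 Q1 : finType) (src tgt : Q1 -> Q0) (Sp : {set Q0}).

(* Arrows of Q^sp: inl a for a in Q1, inr i for the special loop eps_i
   (only meaningful when i \in Sp). *)
Definition sarrow := (Q1 + Q0)%type.
Definition ssrc (a : sarrow) : Q0 := match a with inl b => src b | inr i => i end.
Definition stgt (a : sarrow) : Q0 := match a with inl b => tgt b | inr i => i end.
Definition sarrow_valid (a : sarrow) : bool :=
  match a with inl _ => true | inr i => i \in Sp end.

(* Raw paths: (start vertex, arrows in ORDER OF TRAVERSAL).  The path written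
   beta alpha in the paper (alpha first, right-to-left composition) is
   represented by (ssrc alpha, [:: alpha; beta]).  (v, [::]) is the trivial
   path e_v. *)
Definition rpath := (Q0 * seq sarrow)%type.
Definition rpath_valid (r : rpath) : bool :=
  all sarrow_valid r.2 &&
  (if r.2 is a :: s then (ssrc a == r.1) && path (fun x y => stgt x == ssrc y) a s
   else true).
Definition rpath_end (r : rpath) : Q0 := if r.2 is a :: s then stgt (last a s) else r.1.

Definition qpath := {r : rpath | rpath_valid r}.

Definition pathalg (k : fieldType) := {malg k[qpath]}.

(* concatenation: p first, then q  (i.e. the paper's product q p) *)
Definition pcat (p q : qpath) : option qpath :=
  if rpath_end (val p) == (val q).1 then
    insub ((val p).1, (val p).2 ++ (val q).2) else None.

(* multiplication in k Q^sp, paths composed right to left: in (x * y), y acts first *)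
Definition pmul (k : fieldType) (x y : pathalg k) : pathalg k :=
  \sum_(p <- msupp x) \sum_(q <- msupp y)
     (x@_p * y@_q) *: (match pcat q p with Some r => mkmalgU r 1 | None => 0 end).

Definition gen_ideal (k : fieldType) (X : pathalg k -> Prop) (a : pathalg k) : Prop :=
  exists s : seq (k * qpath * pathalg k * qpath),
    (forall t, t \in s -> X t.1.2) /\
    a = \sum_(t <- s) t.1.1.1 *: pmul (pmul (mkmalgU t.1.1.2 1) t.1.2) (mkmalgU t.2 1).

Definition Isp (I : pred rpath) (r : rpath) : bool :=
  I r || [exists i, (i \in Sp) && (r == (i, [:: inr i; inr i]))].

Definition gens_sp (k : fieldType) (I : pred rpath) (a : pathalg k) : Prop :=
  (exists p : qpath, I (val p) /\ a = mkmalgU p 1) \/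
  (exists (i : Q0) (p2 : qpath), val p2 = (i, [:: inr i; inr i]) /\ a = mkmalgU p2 1).

Definition gens_sg (k : fieldType) (I : pred rpath) (a : pathalg k) : Prop :=
  (exists p : qpath, I (val p) /\ a = mkmalgU p 1) \/
  (exists (i : Q0) (p2 p1 : qpath), val p2 = (i, [:: inr i; inr i]) /\
      val p1 = (i, [:: inr i]) /\ a = mkmalgU p2 1 - mkmalgU p1 1).

Definition gentle_sp (I : pred rpath) : Prop :=
  (forall v : Q0, #|[pred a | sarrow_valid a && (ssrc a == v)]| <= 2)%N /\
  (forall v : Q0, #|[pred a | sarrow_valid a && (stgt a == v)]| <= 2)%N /\
  (forall r, Isp I r -> size r.2 = 2%N) /\
  (forall al, sarrow_valid al ->
     (#|[pred be | sarrow_valid be && (stgt al == ssrc be)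
                    && Isp I (ssrc al, [:: al; be])]| <= 1)%N /\
     (#|[pred ga | sarrow_valid ga && (stgt al == ssrc ga)
                    && ~~ Isp I (ssrc al, [:: al; ga])]| <= 1)%N) /\
  (forall al, sarrow_valid al ->
     (#|[pred be | sarrow_valid be && (stgt be == ssrc al)
                    && Isp I (ssrc be, [:: be; al])]| <= 1)%N /\
     (#|[pred ga | sarrow_valid ga && (stgt ga == ssrc al)
                    && ~~ Isp I (ssrc ga, [:: ga; al])]| <= 1)%N).

Definition skew_gentle (I : pred rpath) : Prop :=
  (forall r, I r -> rpath_valid r /\ all (fun a => if a is inl _ then true else false) r.2)
  /\ gentle_sp I.

(* k-linear isomorphism A/J1 ~= A/J2 : a linear map f : A -> A inducing a
   well-defined bijection between the quotients *)
Definition quot_iso (k : fieldType) (J1 J2 : pathalg k -> Prop) : Prop :=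
  exists f : {linear pathalg k -> pathalg k},
    (forall x, J2 (f x) <-> J1 x) /\ (forall y, exists x, J2 (y - f x)).

Definition quot_findim (k : fieldType) (J : pathalg k -> Prop) : Prop :=
  exists (n : nat) (b : 'I_n -> pathalg k),
    forall x, exists c : 'I_n -> k, J (x - \sum_(i < n) c i *: b i).

End SkewGentle.

(* Call a path of Q^sp *reduced* when it contains no subpath in I and no
   factor eps_i eps_i.  The ideal <I^sp> is generated by paths, so it is
   spanned by the non-reduced paths: no element of <I^sp> has a reduced path in
   its support, and every non-reduced path lies in <I^sp>.  On the other side,
   let rho : A -> A be the linear map sending a path p to 0 if p contains a
   subpath in I, and otherwise to the path obtained from p by collapsing every
   run eps_i ... eps_i of special loops to a single eps_i.  Then
     - rho kills every generator of <I^sg> multiplied by paths on both sides,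
       hence rho kills <I^sg>;
     - x - rho x lies in <I^sg>, since eps_i^2 = eps_i modulo <I^sg>;
     - rho x is supported on reduced paths.
   Together these say that rho induces a bijection A/<I^sg> -> A/<I^sp>.
   Finally, finite dimensionality is transported along any such bijection. *)

From HB Require Import structures.
From mathcomp Require Import all_boot all_order all_algebra.
From mathcomp Require Import finmap.
From mathcomp.multinomials Require Import monalg.
Set Implicit Arguments. Unset Strict Implicit. Unset Printing Implicit Defensive.
Import Order.TTheory GRing.Theory.
Local Open Scope ring_scope.

Section SortedSeq.
Variables (T : Type) (r : rel T).

Lemma unsorted_split s :
  ~~ sorted r s -> exists s1 x y s3, s = s1 ++ x :: y :: s3 /\ ~~ r x y.
Proof.
elim: s => [|x s IH] //=; case: s IH => [|y s] IH //=.
rewrite negb_and => /orP[nxy | /IH [s1 [x' [y' [s3 [-> nxy]]]]]].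
- by exists [::], x, y, s.
- by exists (x :: s1), x', y', s3.
Qed.

Lemma unsorted_cat s1 x y s3 : ~~ r x y -> ~~ sorted r (s1 ++ x :: y :: s3).
Proof. by move=> nxy; apply/negP => /cat_sorted2 [_] /=; rewrite (negbTE nxy). Qed.

Lemma sorted_drop (P : pred T) s1 a b s3 :
  (forall z w, P w -> r z w) -> P a -> P b ->
  sorted r (s1 ++ a :: b :: s3) = sorted r (s1 ++ b :: s3).
Proof.
move=> rP Pa Pb; case: s1 => [|c s1] /=; first by rewrite rP.
by rewrite !cat_path /= !rP.
Qed.

Lemma seq_size_ind (P : seq T -> Prop) :
  (forall s, (forall s', (size s' < size s)%N -> P s') -> P s) -> forall s, P s.
Proof.
move=> IH s; elim: {s}(size s).+1 {-2}s (ltnSn (size s)) => // n IHn s sn.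
by apply: IH => s' s's; apply: IHn; exact: leq_trans s's sn.
Qed.

End SortedSeq.

Section ArrowSequences.
Variables (Q0 Q1 : finType) (src tgt : Q1 -> Q0) (Sp : {set Q0}).
Local Notation sarrow := (sarrow Q0 Q1).
Local Notation ssrc := (ssrc src).
Local Notation stgt := (stgt tgt).
Local Notation valid := (rpath_valid src tgt Sp).

Definition composable (x y : sarrow) : bool := stgt x == ssrc y.

Definition walk_from (v : Q0) (s : seq sarrow) : bool :=
  if s is a :: s' then (ssrc a == v) && path composable a s' else true.

Definition walk_end (v : Q0) (s : seq sarrow) : Q0 :=
  if s is a :: s' then stgt (last a s') else v.

Lemma validE v s : valid (v, s) = all (sarrow_valid Sp) s && walk_from v s.
Proof. by []. Qed.

Lemma rpath_endE v s : rpath_end tgt (v, s) = walk_end v s.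
Proof. by []. Qed.

Lemma walk_from_cat v s1 s2 :
  walk_from v (s1 ++ s2) = walk_from v s1 && walk_from (walk_end v s1) s2.
Proof.
case: s1 => [|a s1] //=; rewrite cat_path andbA; congr (_ && _).
by case: s2 => //= b s2; rewrite /composable eq_sym.
Qed.

Lemma valid_cat v s1 s2 :
  valid (v, s1 ++ s2) = valid (v, s1) && valid (walk_end v s1, s2).
Proof.
rewrite !validE all_cat walk_from_cat.
by case: (all _ s1) (all _ s2) (walk_from v s1) => [] [] [].
Qed.

Lemma valid_head v x s : valid (v, x :: s) -> ssrc x = v.
Proof. by rewrite validE /= => /andP[_ /andP[/eqP]]. Qed.

Lemma valid_loops v s1 i j s3 : valid (v, s1 ++ inr i :: inr j :: s3) -> j = i.
Proof.
rewrite valid_cat => /andP[_]; rewrite validE /= => /andP[_ /and3P[_ /eqP e _]].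
exact: esym e.
Qed.

Lemma valid_drop_loop v s1 a s3 : ssrc a = stgt a ->
  valid (v, s1 ++ a :: a :: s3) -> valid (v, s1 ++ a :: s3).
Proof.
move=> la; rewrite !valid_cat => /andP[-> ]; rewrite !validE /=.
by case/andP => /and3P[-> _ ->] /andP[-> /andP[_ ->]].
Qed.

Definition isloop (a : sarrow) : bool := if a is inr _ then true else false.

Definition loopgap (x y : sarrow) : bool := ~~ (isloop x && isloop y).

Fixpoint collapse (s : seq sarrow) : seq sarrow :=
  if s is a :: s' then
    if s' is b :: _ then
      if isloop a && isloop b then collapse s' else a :: collapse s'
    else [:: a]
  else [::].

Lemma collapse_cons2 a b s : collapse (a :: b :: s) =
  if isloop a && isloop b then collapse (b :: s) else a :: collapse (b :: s).
Proof. by []. Qed.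

Lemma collapse_drop s1 a b s3 : isloop a -> isloop b ->
  collapse (s1 ++ a :: b :: s3) = collapse (s1 ++ b :: s3).
Proof.
move=> la lb; elim: s1 => [|c s1 IH]; first by rewrite collapse_cons2 la lb.
case: s1 IH => [|d s1] IH; first by rewrite !cat1s !collapse_cons2 la lb andbT.
by rewrite !cat_cons !collapse_cons2 -!cat_cons IH.
Qed.

Lemma collapse_id s : sorted loopgap s -> collapse s = s.
Proof.
elim: s => [|a s IH] //; case: s IH => [|b s] IH // /andP[gab gs].
by rewrite collapse_cons2 (negbTE gab) IH.
Qed.

Lemma collapse_head a s :
  exists a' t, collapse (a :: s) = a' :: t /\ isloop a' = isloop a.
Proof.
elim: s a => [|b s IH] a; first by exists a, [::].
rewrite collapse_cons2; case: ifP => [/andP[la lb]|_].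
  by have [a' [t [-> la']]] := IH b; exists a', t; rewrite la' la lb.
by exists a, (collapse (b :: s)).
Qed.

Lemma collapse_sorted s : sorted loopgap (collapse s).
Proof.
case: s => // a s; elim: s a => [|b s IH] a //.
rewrite collapse_cons2; case: ifP => [_|nab]; first exact: IH.
have [b' [t [e lb']]] := collapse_head b s; move: (IH b); rewrite e /= => ->.
by rewrite andbT /loopgap lb' nab.
Qed.

Lemma sorted_collapse (r : rel sarrow) : (forall z w, isloop w -> r z w) ->
  forall s, sorted r (collapse s) = sorted r s.
Proof.
move=> rl; apply: seq_size_ind => s IH.
case gs: (sorted loopgap s); first by rewrite collapse_id.
have [s1 [a [b [s3 [es /negPn /andP[la lb]]]]]] := unsorted_split (negbT gs).
rewrite es collapse_drop // (sorted_drop s1 s3 rl la lb) IH //.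
by rewrite es !size_cat /= ltn_add2l.
Qed.

Lemma valid_collapse v s : valid (v, s) -> valid (v, collapse s).
Proof.
elim/seq_size_ind: s => s IH vs.
case gs: (sorted loopgap s); first by rewrite collapse_id.
have [s1 [a [b [s3 [es /negPn /andP[la lb]]]]]] := unsorted_split (negbT gs).
move: vs; rewrite es collapse_drop //.
case: a la es => // i _ es; case: b lb es => // j _ es vs.
have ji := valid_loops vs; subst j.
by apply: IH; [rewrite es !size_cat /= ltn_add2l | exact: valid_drop_loop vs].
Qed.

End ArrowSequences.

Arguments isloop {Q0 Q1}.
Arguments loopgap {Q0 Q1}.
Arguments collapse {Q0 Q1}.

Section PathAlgebra.
Variables (k : fieldType) (Q0 Q1 : finType) (src tgt : Q1 -> Q0) (Sp : {set Q0}).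
Local Notation valid := (rpath_valid src tgt Sp).
Local Notation walk_end := (walk_end tgt).
Local Notation qp := (qpath src tgt Sp).
Local Notation A := (pathalg src tgt Sp k).
Local Notation U p := (@mkmalgU qp k p 1).

Definition lin (h : qp -> A) (x : A) : A := \sum_(p <- msupp x) x@_p *: h p.

Lemma linEw h (x : A) (d : {fset qp}) : (msupp x `<=` d)%fset ->
  lin h x = \sum_(p <- d) x@_p *: h p.
Proof.
move=> sub; apply: big_fset_incl => // p _ /mcoeff_outdom ->.
by rewrite scale0r.
Qed.

Lemma lin_is_linear h : linear_for *:%R (lin h).
Proof.
move=> a x y /=; set d := (msupp x `|` msupp y)%fset.
rewrite (@linEw h _ d); last first.
  by apply: fsubset_trans (msuppD_le _ _) _; apply: fsetUSS => //; exact: msuppZ_le.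
rewrite (@linEw h x d) ?fsubsetUl // (@linEw h y d) ?fsubsetUr //.
rewrite scaler_sumr -big_split /=; apply: eq_bigr => p _.
by rewrite mcoeffD mcoeffZ scalerDl scalerA.
Qed.

HB.instance Definition _ h :=
  GRing.isLinear.Build k A A *:%R (lin h) (lin_is_linear h).

(* mcoeffU stated at the type A: rewriting with the generic statement makes
   the unifier unfold the finitely supported representation of elements. *)
Lemma coefU (c : k) (p q : qp) : (<< c *g p >> : A)@_q = c *+ (p == q).
Proof. exact: mcoeffU. Qed.

Lemma scaleU (c : k) (p : qp) : c *: (U p : A) = (<< c *g p >> : A).
Proof.
apply/malgP => q; rewrite mcoeffZ [X in c * X](coefU 1 p q) (coefU c p q).
by case: (p == q); rewrite ?mulr1n ?mulr0n ?mulr1 ?mulr0.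
Qed.

Lemma linU h (p : qp) : lin h (U p) = h p.
Proof. by rewrite /lin msuppU oner_eq0 big_seq_fset1 mcoeffUU scale1r. Qed.

Lemma linB_fun h1 h2 (x : A) : lin (fun p => h1 p - h2 p) x = lin h1 x - lin h2 x.
Proof. by rewrite /lin -sumrB; apply: eq_bigr => p _; rewrite scalerBr. Qed.

Lemma lin_id (x : A) : lin (fun p => U p) x = x.
Proof. by rewrite {2}(monalgE x) /lin; apply: eq_bigr => p _; rewrite scaleU. Qed.

Lemma coef_sum0 (T : Type) (r : seq T) (P : pred T) (F : T -> A) (q : qp) :
  (forall i, P i -> (F i)@_q = 0) -> (\sum_(i <- r | P i) F i)@_q = 0.
Proof.
move=> F0; apply: (big_ind (fun y : A => y@_q = 0)) => //; first exact: mcoeff0.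
by move=> y1 y2 e1 e2; rewrite mcoeffD e1 e2 addr0.
Qed.

Lemma coefU_neq (r q : qp) : r != q -> (U r)@_q = 0.
Proof. by move=> /negbTE nrq; rewrite (coefU 1 r q) nrq. Qed.

Definition pcatU (q p : qp) : A := if pcat q p is Some r then U r else 0.

Lemma pmulE (x y : A) : pmul x y = lin (fun p => lin (fun q => pcatU q p) y) x.
Proof.
rewrite /pmul /lin; apply: eq_bigr => p _; rewrite scaler_sumr.
by apply: eq_bigr => q _; rewrite scalerA.
Qed.

Lemma pmulU (a b : qp) : pmul (U a) (U b) = pcatU b a.
Proof. by rewrite pmulE !linU. Qed.

Lemma pcat_none (q p : qp) : rpath_end tgt (val q) != (val p).1 -> pcat q p = None.
Proof. by rewrite /pcat => /negbTE ->. Qed.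

Lemma pcat_some (q p : qp) : rpath_end tgt (val q) = (val p).1 ->
  exists r, pcat q p = Some r /\ val r = ((val q).1, (val q).2 ++ (val p).2).
Proof.
case: q p => [[v s] vq] [[w t] vp] /= e.
have vst : valid (v, s ++ t) by rewrite valid_cat vq -rpath_endE e vp.
by rewrite /pcat e eqxx insubT /=; eexists.
Qed.

Lemma qpath_loops (p : qp) s1 i j s3 :
  (val p).2 = s1 ++ inr i :: inr j :: s3 -> j = i.
Proof. by case: p => [[v s] vp] /= es; move: vp; rewrite es => /valid_loops. Qed.

Definition chain3 (b u a : qp) : bool :=
  (rpath_end tgt (val b) == (val u).1) && (rpath_end tgt (val u) == (val a).1).

Definition cat3 (b u a : qp) : qp :=
  insubd b ((val b).1, (val b).2 ++ (val u).2 ++ (val a).2).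

Lemma val_cat3 (b u a : qp) : chain3 b u a ->
  val (cat3 b u a) = ((val b).1, (val b).2 ++ (val u).2 ++ (val a).2).
Proof.
case: a u b => [[va sa] Ha] [[vu su] Hu] [[vb sb] Hb].
rewrite /chain3 /= !rpath_endE => /andP[/eqP e1 /eqP e2].
have vc : valid (vb, sb ++ su ++ sa) by rewrite valid_cat Hb e1 valid_cat Hu e2 Ha.
exact: insubdK.
Qed.

Definition sandwich (a b : qp) (x : A) : A := pmul (pmul (U a) x) (U b).

Lemma pmulBl (x y z : A) : pmul (x - y) z = pmul x z - pmul y z.
Proof. by rewrite !pmulE linearB. Qed.

Lemma pmulBr (x y z : A) : pmul z (x - y) = pmul z x - pmul z y.
Proof. by rewrite !pmulE -linB_fun; apply: eq_bigr => p _; rewrite linearB. Qed.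

Lemma sandwichB a b (x y : A) :
  sandwich a b (x - y) = sandwich a b x - sandwich a b y.
Proof. by rewrite /sandwich pmulBr pmulBl. Qed.

Lemma sandwichU (a u b : qp) :
  sandwich a b (U u) = if chain3 b u a then U (cat3 b u a) else 0.
Proof.
rewrite /sandwich pmulU /pcatU /chain3.
have [eua|nua] := eqVneq (rpath_end tgt (val u)) (val a).1; last first.
  by rewrite andbF pcat_none ?nua // pmulE linear0.
have [r [-> er]] := pcat_some eua; rewrite pmulU /pcatU andbT.
have [ebu|nbu] := eqVneq (rpath_end tgt (val b)) (val u).1; last first.
  by rewrite pcat_none // er.
have [r' [-> er']] := pcat_some (etrans ebu (congr1 fst (esym er))).
suff -> : r' = cat3 b u a by [].
by apply: val_inj; rewrite er' er val_cat3 // /chain3 ebu eua !eqxx.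
Qed.

Lemma sandwich_chain (b u a : qp) : chain3 b u a -> sandwich a b (U u) = U (cat3 b u a).
Proof. by move=> ch; rewrite sandwichU ch. Qed.

Lemma sandwich_diff (b u v a : qp) : chain3 b u a -> chain3 b v a ->
  sandwich a b (U u - U v) = U (cat3 b u a) - U (cat3 b v a).
Proof.
by move=> chu chv; rewrite sandwichB [X in X - _]sandwich_chain // sandwich_chain.
Qed.

Lemma path_factor (p : qp) s1 s2 s3 : (val p).2 = s1 ++ s2 ++ s3 ->
  exists b u a : qp, [/\ val b = ((val p).1, s1),
     val u = (walk_end (val p).1 s1, s2),
     val a = (walk_end (walk_end (val p).1 s1) s2, s3),
     chain3 b u a & cat3 b u a = p].
Proof.
case: p => [[v s] vp] /= es; subst s.
have /andP[vb vua] : valid (v, s1) && valid (walk_end v s1, s2 ++ s3).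
  by rewrite -valid_cat.
have /andP[vu va] : valid (walk_end v s1, s2) &&
                    valid (walk_end (walk_end v s1) s2, s3) by rewrite -valid_cat.
pose b : qp := Sub _ vb; pose u : qp := Sub _ vu; pose a : qp := Sub _ va.
have ch : chain3 b u a by rewrite /chain3 !eqxx.
by exists b, u, a; split => //; apply: val_inj; rewrite val_cat3.
Qed.

Section Ideal.
Variable X : A -> Prop.
Local Notation J := (gen_ideal X).

Lemma ideal0 : J 0.
Proof. by exists [::]; split => //; rewrite big_nil. Qed.

Lemma idealD x y : J x -> J y -> J (x + y).
Proof.
move=> [s1 [h1 ->]] [s2 [h2 ->]]; exists (s1 ++ s2); split; last by rewrite big_cat.
by move=> t; rewrite mem_cat => /orP[/h1|/h2].
Qed.

Lemma idealZ c x : J x -> J (c *: x).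
Proof.
move=> [s [h ->]]; exists (map (fun t => (c * t.1.1.1, t.1.1.2, t.1.2, t.2)) s).
split; first by move=> t /mapP[t0 /h Ht0 ->].
by rewrite big_map scaler_sumr; apply: eq_bigr => t _; rewrite scalerA.
Qed.

Lemma ideal_sum (T : Type) (r : seq T) (P : pred T) (F : T -> A) :
  (forall i, P i -> J (F i)) -> J (\sum_(i <- r | P i) F i).
Proof. by move=> JF; apply: big_ind => //; [exact: ideal0 | exact: idealD]. Qed.

Lemma ideal_sandwich a b x : X x -> J (sandwich a b x).
Proof.
move=> Xx; exists [:: (1, a, x, b)]; split; first by move=> t; rewrite inE => /eqP ->.
by rewrite big_seq1 scale1r.
Qed.

End Ideal.

End PathAlgebra.

Section Retraction.
Variables (k : fieldType) (Q0 Q1 : finType) (src tgt : Q1 -> Q0) (Sp : {set Q0}).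
Variable I : pred (rpath Q0 Q1).
Hypothesis I_loopfree : forall r, I r -> ~~ has isloop r.2.
Hypothesis I_size2 : forall r, I r -> size r.2 = 2%N.

Local Notation sarrow := (sarrow Q0 Q1).
Local Notation ssrc := (ssrc src).
Local Notation valid := (rpath_valid src tgt Sp).
Local Notation qp := (qpath src tgt Sp).
Local Notation A := (pathalg src tgt Sp k).
Local Notation U p := (@mkmalgU qp k p 1).
Local Notation Jsg := (gen_ideal (@gens_sg Q0 Q1 src tgt Sp k I)).
Local Notation Jsp := (gen_ideal (@gens_sp Q0 Q1 src tgt Sp k I)).

Definition relfree (x y : sarrow) : bool := ~~ I (ssrc x, [:: x; y]).

Lemma relfree_loop z w : isloop w -> relfree z w.
Proof. by move=> lw; apply/negP => /I_loopfree /=; rewrite lw orbT. Qed.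

Lemma relfree_drop_loop s1 i s3 :
  sorted relfree (s1 ++ inr i :: inr i :: s3) = sorted relfree (s1 ++ inr i :: s3).
Proof. exact: sorted_drop relfree_loop _ _. Qed.

(* The paths forming a basis of A/<I^sp>. *)
Definition reduced (p : qp) : bool :=
  sorted relfree (val p).2 && sorted loopgap (val p).2.

Lemma unreduced_split (r : qp) s1 x y s3 : (val r).2 = s1 ++ x :: y :: s3 ->
  ~~ relfree x y || ~~ loopgap x y -> ~~ reduced r.
Proof.
move=> er /orP nxy; rewrite /reduced er negb_and.
by case: nxy => nxy; apply/orP; [left | right]; apply: unsorted_cat.
Qed.

Lemma I_shape (u : qp) : I (val u) ->
  exists x y, val u = (ssrc x, [:: x; y]) /\ ~~ relfree x y.
Proof.
case: u => [[w s] vu] /= Iu; have := I_size2 Iu.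
case: s vu Iu => [|x [|y [|z s]]] //= vu Iu _.
by move: Iu; rewrite -(valid_head vu) => Iu; exists x, y; rewrite /relfree negbK.
Qed.

Definition collapse_path (p : qp) : qp := insubd p ((val p).1, collapse (val p).2).

Lemma val_collapse_path p : val (collapse_path p) = ((val p).1, collapse (val p).2).
Proof.
have vc : valid ((val p).1, collapse (val p).2).
  by case: p => [[v s] vp]; exact: valid_collapse.
exact: insubdK.
Qed.

Lemma reduced_collapse_path p : sorted relfree (val p).2 -> reduced (collapse_path p).
Proof.
move=> fp; rewrite /reduced val_collapse_path /=.
by rewrite (sorted_collapse relfree_loop) fp collapse_sorted.
Qed.

Definition retract (p : qp) : A :=
  if sorted relfree (val p).2 then U (collapse_path p) else 0.

Local Notation rho := (lin retract).

Lemma retract_reduced p : reduced p -> retract p = U p.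
Proof.
case/andP => fp gp; rewrite /retract fp.
suff -> : collapse_path p = p by [].
by apply: val_inj; rewrite val_collapse_path collapse_id //; case: (val p).
Qed.

Lemma retract_eq (p1 p2 : qp) : (val p1).1 = (val p2).1 ->
  collapse (val p1).2 = collapse (val p2).2 ->
  sorted relfree (val p1).2 = sorted relfree (val p2).2 -> retract p1 = retract p2.
Proof.
move=> e1 e2 e3; rewrite /retract e3.
suff -> : collapse_path p1 = collapse_path p2 by [].
by apply: val_inj; rewrite !val_collapse_path e1 e2.
Qed.

Lemma rho_coef_unreduced (x : A) q : ~~ reduced q -> (rho x)@_q = 0.
Proof.
move=> nq; apply: coef_sum0 => p _; rewrite mcoeffZ /retract.
case: ifP => fp; last by rewrite mcoeff0 mulr0.
rewrite coefU_neq ?mulr0 //; apply: contraNneq nq => <-.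
exact: reduced_collapse_path.
Qed.

Lemma sandwich_coef_reduced (a b u q : qp) x y : reduced q ->
  (val u).2 = [:: x; y] -> ~~ relfree x y || ~~ loopgap x y ->
  (sandwich a b (U u))@_q = 0.
Proof.
move=> rq eu nxy; rewrite sandwichU; case: ifP => ch; last exact: mcoeff0.
apply: coefU_neq; apply: contraTneq rq => <-.
by apply: (@unreduced_split _ (val b).2 x y (val a).2) nxy; rewrite val_cat3 // eu.
Qed.

Lemma Jsp_coef_reduced (y : A) : Jsp y -> forall q, reduced q -> y@_q = 0.
Proof.
move=> [s [gs ->]] q rq; rewrite big_seq; apply: coef_sum0 => t /gs gt.
rewrite mcoeffZ; suff -> : (sandwich t.1.1.2 t.2 t.1.2)@_q = 0 by rewrite mulr0.
case: gt => [[u [Iu ->]] | [i [p2 [e2 ->]]]].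
- have [x [z [eu nxz]]] := I_shape Iu.
  by apply: (@sandwich_coef_reduced _ _ _ _ x z); rewrite ?eu ?nxz.
- by apply: (@sandwich_coef_reduced _ _ _ _ (inr i) (inr i)); rewrite ?e2 ?orbT.
Qed.

Lemma rho_sandwich_gen (a b : qp) (x : A) :
  @gens_sg Q0 Q1 src tgt Sp k I x -> rho (sandwich a b x) = 0.
Proof.
case=> [[u [Iu ->]] | [i [p2 [p1 [e2 [e1 ->]]]]]].
- rewrite sandwichU; case: ifP => ch; last exact: linear0.
  rewrite linU /retract; have [x0 [y0 [eu nxy]]] := I_shape Iu.
  by rewrite ifF //; apply/negbTE; rewrite val_cat3 //= eu; exact: unsorted_cat.
- rewrite sandwichB [X in rho (X - _)]sandwichU [X in rho (_ - X)]sandwichU.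
  have e12 : chain3 b p1 a = chain3 b p2 a by rewrite /chain3 e1 e2.
  rewrite e12; have [ch|_] := boolP (chain3 b p2 a); last by rewrite subr0 linear0.
  have ch1 : chain3 b p1 a by rewrite e12.
  rewrite linearB [X in X - _]linU [X in _ - X]linU.
  apply/eqP; rewrite subr_eq0; apply/eqP.
  apply: retract_eq; rewrite (val_cat3 ch) (val_cat3 ch1) e2 e1 //=.
  + exact: collapse_drop.
  + exact: relfree_drop_loop.
Qed.

Lemma rho_Jsg (x : A) : Jsg x -> rho x = 0.
Proof.
move=> [s [gs ->]]; rewrite linear_sum big_seq big1 // => t /gs gt.
by rewrite linearZ /= rho_sandwich_gen ?scaler0.
Qed.

Lemma path_through_relation (X : A -> Prop) :
  (forall u : qp, I (val u) -> X (U u)) ->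
  forall (p : qp) s1 x y s3, (val p).2 = s1 ++ x :: y :: s3 -> ~~ relfree x y ->
  gen_ideal X (U p).
Proof.
move=> XI p s1 x y s3 ep nxy.
have [b [u [a [_ eu _ ch <-]]]] := path_factor (s2 := [:: x; y]) ep.
rewrite -sandwich_chain //; apply: ideal_sandwich; apply: XI.
have vu := valP u; rewrite eu in vu.
by rewrite eu -(valid_head vu); move: nxy; rewrite /relfree negbK.
Qed.

Lemma loop_square_congr (p : qp) s1 i s3 : (val p).2 = s1 ++ inr i :: inr i :: s3 ->
  exists p' : qp, val p' = ((val p).1, s1 ++ inr i :: s3) /\ Jsg (U p - U p').
Proof.
move=> ep.
have [b [u [a [eb eu ea ch Ep]]]] := path_factor (s2 := [:: inr i; inr i]) ep.
have vu := valP u; rewrite eu in vu.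
have wi : walk_end tgt (val p).1 s1 = i by rewrite -(valid_head vu).
rewrite wi in eu ea vu.
have ve : valid (i, [:: inr i]).
  by move: vu; rewrite -[[:: _; _]]/([:: inr i] ++ [:: inr i]) valid_cat => /andP[].
pose e : qp := Sub _ ve.
have che : chain3 b e a by rewrite /chain3 eb ea /= rpath_endE wi !eqxx.
exists (cat3 b e a); split; first by rewrite val_cat3 // eb ea.
rewrite -Ep -sandwich_diff //.
by apply: ideal_sandwich; right; exists i, u, e.
Qed.

Lemma path_congr_retract (p : qp) : Jsg (U p - retract p).
Proof.
have [n] := ubnP (size (val p).2); elim: n p => // n IH p /ltnSE sp.
case fp: (sorted relfree (val p).2); last first.
  have [s1 [x [y [s3 [ep nxy]]]]] := unsorted_split (negbT fp).
  rewrite /retract fp subr0; apply: path_through_relation ep nxy => u Iu.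
  by left; exists u.
case gp: (sorted loopgap (val p).2).
  by rewrite retract_reduced ?subrr; [exact: ideal0 | rewrite /reduced fp gp].
have [s1 [a [b [s3 [ep /negPn /andP[la lb]]]]]] := unsorted_split (negbT gp).
case: a la ep => // i _; case: b lb => // j _ ep.
have ji := qpath_loops ep; subst j; have [p' [ep' Ip']] := loop_square_congr ep.
have -> : retract p = retract p'.
  apply: retract_eq; rewrite ep' ?ep //=.
  - exact: collapse_drop.
  - exact: relfree_drop_loop.
rewrite -(subrKA (U p')); apply: idealD Ip' (IH p' _).
by move: sp; rewrite ep' ep /= !size_cat /= -addnS.
Qed.

Lemma rho_congr (x : A) : Jsg (x - rho x).
Proof.
rewrite -{1}(lin_id x) -linB_fun /lin.
by apply: ideal_sum => p _; apply: idealZ; exact: path_congr_retract.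
Qed.

Lemma unreduced_in_Jsp (q : qp) : ~~ reduced q -> Jsp (U q).
Proof.
rewrite /reduced negb_and => /orP[nf | ng].
  have [s1 [x [y [s3 [eq nxy]]]]] := unsorted_split nf.
  by apply: path_through_relation eq nxy => u Iu; left; exists u.
have [s1 [a [b [s3 [eq /negPn /andP[la lb]]]]]] := unsorted_split ng.
case: a la eq => // i _; case: b lb => // j _ eq.
have ji := qpath_loops eq; subst j.
have [b [u [a [_ eu _ ch <-]]]] := path_factor (s2 := [:: inr i; inr i]) eq.
rewrite -sandwich_chain //; apply: ideal_sandwich; right; exists i, u; split => //.
have vu := valP u; rewrite eu in vu.
by rewrite eu -(valid_head vu).
Qed.

(* rho is onto modulo <I^sp>: y is congruent to its reduced part, which is
   fixed by rho. *)
Lemma rho_surj (y : A) : exists x, Jsp (y - rho x).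
Proof.
exists (\sum_(q <- msupp y | reduced q) y@_q *: U q).
have -> : rho (\sum_(q <- msupp y | reduced q) y@_q *: U q) =
          \sum_(q <- msupp y | reduced q) y@_q *: U q.
  rewrite linear_sum; apply: eq_bigr => q rq.
  by rewrite linearZ /= linU retract_reduced.
rewrite -[X in X - _]lin_id /lin (bigID reduced) /= addrAC subrr add0r.
by apply: ideal_sum => q nq; apply: idealZ; exact: unreduced_in_Jsp.
Qed.

Lemma rho_iso : quot_iso Jsg Jsp.
Proof.
exists rho; split => [x|]; last exact: rho_surj.
split => [Ix | /rho_Jsg rho0]; last by rewrite /= rho0; exact: ideal0.
have rho0 : rho x = 0.
  apply/malgP => q; rewrite mcoeff0.
  case rq: (reduced q); first exact: Jsp_coef_reduced Ix q rq.
  exact: rho_coef_unreduced (negbT rq).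
by have := rho_congr x; rewrite rho0 subr0.
Qed.

End Retraction.

Section FiniteDimension.
Variables (k : fieldType) (Q0 Q1 : finType) (src tgt : Q1 -> Q0) (Sp : {set Q0}).
Local Notation A := (pathalg src tgt Sp k).

Lemma quot_iso_findim (J1 J2 : A -> Prop) : J2 0 ->
  (forall x y, J2 x -> J2 y -> J2 (x + y)) -> (forall c x, J2 x -> J2 (c *: x)) ->
  quot_iso J1 J2 -> quot_findim J1 <-> quot_findim J2.
Proof.
move=> J0 JD JZ [phi [Jphi surj]].
have Jcomb n (c : 'I_n -> k) (v : 'I_n -> A) :
    (forall i, J2 (v i)) -> J2 (\sum_i c i *: v i).
  by move=> Jv; apply: big_ind => // i _; apply: JZ.
have Jtrans x y z : J2 (x - y) -> J2 (y - z) -> J2 (x - z).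
  by move=> Jxy Jyz; rewrite -(subrKA y); exact: JD.
split => [[n [b spanb]] | [n [b spanb]]].
- exists n, (fun i => phi (b i)) => y.
  have [x Jx] := surj y; have [c Jc] := spanb x; exists c.
  apply: Jtrans Jx _; move/(Jphi _): Jc; rewrite linearB linear_sum /=.
  by under eq_bigr do rewrite linearZ /=.
- have [xb Jxb] := @fin_all_exists _ (fun _ => A) (fun i x => J2 (b i - phi x))
    (fun i => surj (b i)).
  exists n, xb => x; have [c Jc] := spanb (phi x); exists c.
  apply/Jphi; rewrite linearB linear_sum /=; under eq_bigr do rewrite linearZ /=.
  apply: Jtrans Jc _; rewrite -sumrB; under eq_bigr do rewrite -scalerBr.
  exact: Jcomb.
Qed.

End FiniteDimension.

Theorem mainTheorem2 (k : closedFieldType) (Q0 Q1 : finType) (src tgt : Q1 -> Q0)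
  (Sp : {set Q0}) (I : pred (rpath Q0 Q1)) :
  skew_gentle src tgt Sp I ->
  quot_iso (gen_ideal (@gens_sg Q0 Q1 src tgt Sp k I))
           (gen_ideal (@gens_sp Q0 Q1 src tgt Sp k I)) /\
  (quot_findim (gen_ideal (@gens_sg Q0 Q1 src tgt Sp k I)) <->
   quot_findim (gen_ideal (@gens_sp Q0 Q1 src tgt Sp k I))).
Proof.
case=> I_arrows [_ [_ [G2 _]]].
have I_size2 r : I r -> size r.2 = 2%N by move=> Ir; apply: G2; rewrite /Isp Ir.
have I_loopfree r : I r -> ~~ has isloop r.2.
  by move=> /I_arrows [_ /allP ar]; apply/hasPn => a /ar; case: a.
have iso := @rho_iso k Q0 Q1 src tgt Sp I I_loopfree I_size2.
split => //; apply: quot_iso_findim iso.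
- exact: ideal0.
- exact: idealD.
- exact: idealZ.
Qed.
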